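(* The diameter of $CK(2,4)$ is $7$. The diameter of $CK(2,3)$ is infinite, and for every $\ell\ge 5$ the diameter of $CK(2,\ell)$ is infinite (i.e. these digraphs are not strongly connected).
   Context: $CK(2,\ell)$ has as vertices all sequences $a_1\ldots a_\ell\in\{0,1,2\}^\ell$ with $a_i\neq a_{i+1}$ for $1\le i\le\ell-1$ and $a_1\ne a_\ell$, and an arc from $a_1\ldots a_\ell$ to $b_1\ldots b_\ell$ iff both are vertices and $b_i=a_{i+1}$ for $1\le i\le \ell-1$. The diameter is the maximum over ordered pairs $(u,v)$ of vertices of the length of a shortest directed $u$–$v$ path, and is infinite if some such path does not exist. *)

From mathcomp Require Import all_boot.
Set Implicit Arguments. Unset Strict Implicit. Unset Printing Implicit Defensive.

(* Symbols {0,1,2} as 'I_3; a word a_1 ... a_l is a seq 'I_3 of size l,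
   with a_{i+1} = nth ord0 s i (0-based indexing). *)
Definition sym := 'I_3.

Definition ck_vertex (l : nat) (s : seq sym) : bool :=
  [&& size s == l,
      all (fun i => nth ord0 s i != nth ord0 s i.+1) (iota 0 l.-1)
    & nth ord0 s 0 != nth ord0 s l.-1].

Definition ck_arc (l : nat) : rel (seq sym) := fun a b =>
  [&& ck_vertex l a, ck_vertex l b
    & all (fun i => nth ord0 b i == nth ord0 a i.+1) (iota 0 l.-1)].

Definition ck_walk (l k : nat) (u v : seq sym) : Prop :=
  exists p : seq (seq sym), [/\ size p = k, path (ck_arc l) u p & last u p = v].

Definition ck_diameter_is (l d : nat) : Prop :=
  (forall u v, ck_vertex l u -> ck_vertex l v -> exists2 k, k <= d & ck_walk l k u v)
  /\ exists u v, [/\ ck_vertex l u, ck_vertex l v &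
                     forall k, ck_walk l k u v -> d <= k].

Definition ck_diameter_infinite (l : nat) : Prop :=
  exists u v, [/\ ck_vertex l u, ck_vertex l v & forall k, ~ ck_walk l k u v].

From mathcomp Require Import all_boot zify.
Set Implicit Arguments. Unset Strict Implicit. Unset Printing Implicit Defensive.

(* Read the letters of a vertex as points of Z/3 and count the up-steps
   x -> x + 1 around the closed word a_1 ... a_l a_1.  An arc replaces the
   two-step path a_l -> a_1 -> a_2 by a_l -> b_l -> a_2, and any two such
   detours between the same endpoints have the same number of up-steps, so
   this winding number is constant along walks.  Swapping the letters 1 and 2
   turns every up-step into a down-step, so it maps a vertex of winding w to
   one of winding l - w; whenever w <> l - w these two vertices lie in
   different strong components.  Words of the form 0 (120)^n t realise such
   a winding for every l >= 3 except l = 4, where every vertex has winding 2.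
   For l = 4 the diameter is computed by exhaustive search over the 18
   vertices. *)

Definition o0 : sym := ord0.
Definition o1 : sym := @Ordinal 3 1 isT.
Definition o2 : sym := @Ordinal 3 2 isT.

Definition syms : seq sym := [:: o0; o1; o2].

Lemma mem_syms (x : sym) : x \in syms.
Proof. by case: x => [[|[|[|?]]] ?]. Qed.

Definition sym_neq : rel sym := fun a b => a != b.

Lemma ck_vertex_nil l : ck_vertex l [::] = false.
Proof. by rewrite /ck_vertex; case: l. Qed.

Lemma ck_vertex_cons l x t :
  ck_vertex l (x :: t) = ((size t).+1 == l) && cycle sym_neq (x :: t).
Proof.
rewrite /ck_vertex; case: eqP => [<-|] //=.
rewrite rcons_path; congr andb.
  apply/allP/(pathP ord0) => H i.
    by move=> Hi; apply: H; rewrite mem_iota.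
  by rewrite mem_iota add0n => /H.
by rewrite -[size t]/((size (x :: t)).-1) nth_last /= eq_sym.
Qed.

Lemma ck_vertex_size_gt1 l s : ck_vertex l s -> 1 < l.
Proof.
case: s => [|x [|y t]]; rewrite ?ck_vertex_nil // ck_vertex_cons.
  by rewrite /= /sym_neq eqxx andbF.
by case/andP=> /eqP <-.
Qed.

Lemma ck_arc_rcons l a b : 0 < l -> ck_arc l a b ->
  b = rcons (behead a) (nth ord0 b l.-1).
Proof.
move=> l_gt0 /and3P[/and3P[/eqP sa _ _] /and3P[/eqP sb _ _] /allP Hab].
apply: (@eq_from_nth _ ord0) => [|i].
  by rewrite size_rcons size_behead sa sb prednK.
rewrite sb nth_rcons size_behead sa => il.
case: ltngtP => [i_lt||->] //;
  last by move: il; rewrite -(prednK l_gt0) ltnS leqNgt => /negP.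
by rewrite nth_behead; apply/eqP/Hab; rewrite mem_iota.
Qed.

Definition up_step (a b : sym) : nat := val b == (val a).+1 %% 3.

Fixpoint ups (s : seq sym) : nat :=
  if s is a :: ((b :: _) as s') then up_step a b + ups s' else 0.

Definition winding (s : seq sym) : nat := ups (rcons s (head ord0 s)).

Lemma ups_cons2 a b s : ups [:: a, b & s] = up_step a b + ups (b :: s).
Proof. by []. Qed.

Lemma ups_rcons a s b : ups (a :: rcons s b) = ups (a :: s) + up_step (last a s) b.
Proof.
elim: s a => [|c s IH] a; first by rewrite /= addn0.
by rewrite rcons_cons !ups_cons2 IH addnA.
Qed.

Lemma up_step_detour (p x y q : sym) :
  p != x -> x != q -> p != y -> y != q ->
  up_step p x + up_step x q = up_step p y + up_step y q.
Proof.
by case: p => [[|[|[|?]]] ?] //; case: x => [[|[|[|?]]] ?] //;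
   case: y => [[|[|[|?]]] ?] //; case: q => [[|[|[|?]]] ?].
Qed.

Lemma winding_arc l a b : 1 < l -> ck_arc l a b -> winding a = winding b.
Proof.
move=> l_gt1 Hab; have Hb := ck_arc_rcons (ltnW l_gt1) Hab.
case/and3P: Hab => Va Vb _.
move: (nth ord0 b l.-1) Hb Vb => y -> Vb.
case: a Va Vb => [|x [|a t]]; rewrite ?ck_vertex_nil //.
  by rewrite ck_vertex_cons => /andP[/eqP l1]; rewrite -l1 in l_gt1.
rewrite /= !ck_vertex_cons => /andP[_ Ca] /andP[_ Cb].
rewrite /winding !rcons_cons [head _ _]/= [head _ _]/= ups_cons2 !ups_rcons last_rcons.
move: Ca => /= /andP[xa]; rewrite rcons_path => /andP[_ lx].
move: Cb => /=; rewrite !rcons_path last_rcons => /andP[/andP[_ ly] ya].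
have := up_step_detour lx xa ly ya; lia.
Qed.

Lemma winding_walk l k u v : 1 < l -> ck_walk l k u v -> winding u = winding v.
Proof.
move=> l_gt1 [p [_ Hp <-]].
elim: p u Hp => [|w p IH] u //= /andP[Huw Hp].
by rewrite (winding_arc l_gt1 Huw) IH.
Qed.

Definition swap12 (x : sym) : sym :=
  if val x == 1 then o2 else if val x == 2 then o1 else o0.

Lemma swap12_inj : injective swap12.
Proof. by case=> [[|[|[|?]]] ?] [[|[|[|?]]] ?] //= _; apply: val_inj. Qed.

Lemma up_step_swap12 a b : a != b -> up_step (swap12 a) (swap12 b) + up_step a b = 1.
Proof. by case: a => [[|[|[|?]]] ?] //; case: b => [[|[|[|?]]] ?]. Qed.

Lemma ups_swap12 x s :
  path sym_neq x s -> ups (map swap12 (x :: s)) + ups (x :: s) = size s.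
Proof.
elim: s x => [|y s IH] x; first by [].
move=> /andP[xy Hs]; rewrite [map _ _]/= !ups_cons2 -map_cons [size _]/=.
by have := IH y Hs; have := up_step_swap12 xy; lia.
Qed.

Lemma ck_vertex_swap12 l s : ck_vertex l (map swap12 s) = ck_vertex l s.
Proof.
case: s => [|x t]; rewrite ?ck_vertex_nil // map_cons !ck_vertex_cons size_map -map_cons.
by rewrite (mono_cycle (e := sym_neq)) // => a b; rewrite /sym_neq (inj_eq swap12_inj).
Qed.

Lemma winding_swap12 l s : ck_vertex l s -> winding (map swap12 s) + winding s = l.
Proof.
case: s => [|x t]; rewrite ?ck_vertex_nil // ck_vertex_cons => /andP[/eqP <- Ct].
rewrite /winding [head _ (map _ _)]/= [head _ _]/= -map_rcons rcons_cons.
by rewrite ups_swap12 ?size_rcons.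
Qed.

Lemma ck_diameter_infinite_winding l s :
  ck_vertex l s -> (winding s).*2 != l -> ck_diameter_infinite l.
Proof.
move=> Vs Hw; exists s, (map swap12 s); split; rewrite ?ck_vertex_swap12 // => k Hk.
have := winding_swap12 Vs; rewrite -(winding_walk (ck_vertex_size_gt1 Vs) Hk).
by move/eqP: Hw; lia.
Qed.

Fixpoint spiral n t : seq sym :=
  if n is n'.+1 then [:: o1, o2, o0 & spiral n' t] else t.

Lemma size_spiral n t : size (spiral n t) = 3 * n + size t.
Proof. by elim: n => //= n ->; lia. Qed.

Lemma cycle_spiral n t : cycle sym_neq (o0 :: t) -> cycle sym_neq (o0 :: spiral n t).
Proof. by move=> Ct; elim: n => //= n. Qed.

Lemma winding_spiral n t : winding (o0 :: spiral n t) = 3 * n + winding (o0 :: t).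
Proof.
elim: n => //= n; rewrite /winding /= => ->.
by rewrite -[up_step o0 o1]/1 -[up_step o1 o2]/1 -[up_step o2 o0]/1; lia.
Qed.

Lemma ck_diameter_infinite_spiral n t :
  cycle sym_neq (o0 :: t) -> (3 * n + winding (o0 :: t)).*2 != 3 * n + (size t).+1 ->
  ck_diameter_infinite (3 * n + (size t).+1).
Proof.
move=> Ct Hw; apply: (@ck_diameter_infinite_winding _ (o0 :: spiral n t)).
  by rewrite ck_vertex_cons size_spiral addnS eqxx cycle_spiral.
by rewrite winding_spiral.
Qed.

Lemma ck_diameter_infinite_not4 l : 3 <= l -> l != 4 -> ck_diameter_infinite l.
Proof.
move=> l_ge3 l_neq4.
have [|[|]] : l = 3 * (l %/ 3 - 1) + 3 \/ l = 3 * (l %/ 3 - 1) + 4 /\ 7 <= l \/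
               l = 3 * (l %/ 3) + 2 /\ 5 <= l by lia.
- move=> El; rewrite El; apply: (ck_diameter_infinite_spiral (t := [:: o1; o2])) => //.
  by rewrite [size _]/= -[winding _]/3 -muln2; lia.
- case=> El l_ge7; rewrite El.
  apply: (ck_diameter_infinite_spiral (t := [:: o1; o0; o1])) => //.
  by rewrite [size _]/= -[winding _]/2 -muln2; lia.
- case=> El l_ge5; rewrite El; apply: (ck_diameter_infinite_spiral (t := [:: o1])) => //.
  by rewrite [size _]/= -[winding _]/1 -muln2; lia.
Qed.

Fixpoint walkb l k (u v : seq sym) : bool :=
  if k is k'.+1 then
    has (walkb l k' ^~ v) [seq w <- [seq rcons (behead u) x | x <- syms] | ck_arc l u w]
  else u == v.

Lemma walkP l k u v : 0 < l -> reflect (ck_walk l k u v) (walkb l k u v).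
Proof.
move=> l_gt0; elim: k u => [|k IH] u.
  apply: (iffP eqP) => [->|[[|? ?] [//= _ _ ->]]]; by exists [::].
apply: (iffP hasP) => [[w]|[[|w p] [// [Hs] /andP[Huw Hp] Hl]]].
  rewrite mem_filter => /andP[Huw _] /IH[p [Hs Hp Hl]].
  by exists (w :: p); rewrite /= Hs Huw Hp.
exists w; last by apply/IH; exists p.
rewrite mem_filter Huw; apply/mapP.
by exists (nth ord0 w l.-1); [exact: mem_syms | exact: ck_arc_rcons].
Qed.
Arguments walkP {l k u v}.

Fixpoint words n : seq (seq sym) :=
  if n is n'.+1 then [seq x :: w | x <- syms, w <- words n'] else [:: [::]].

Lemma mem_words s : s \in words (size s).
Proof. by elim: s => //= x s IH; exact: (allpairs_f cons (mem_syms x) IH). Qed.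

Definition ck_vertices l : seq (seq sym) := [seq s <- words l | ck_vertex l s].

Lemma mem_ck_vertices l s : ck_vertex l s -> s \in ck_vertices l.
Proof.
by move=> Vs; rewrite mem_filter Vs; case/and3P: Vs => /eqP <- _ _; apply: mem_words.
Qed.

Lemma ck4_walks_le7 : all (fun u => all (fun v =>
  has (fun k => walkb 4 k u v) (iota 0 8)) (ck_vertices 4)) (ck_vertices 4).
Proof. by vm_compute. Qed.

Lemma ck4_no_walk_lt7 :
  all (fun k => ~~ walkb 4 k [:: o0; o1; o0; o2] [:: o2; o1; o0; o1]) (iota 0 7).
Proof. by vm_compute. Qed.

Lemma ck_diameter_4 : ck_diameter_is 4 7.
Proof.
split=> [u v Vu Vv|].
  move/allP: ck4_walks_le7 => /(_ u (mem_ck_vertices Vu)) /allP /(_ v (mem_ck_vertices Vv)).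
  by case/hasP=> k; rewrite mem_iota => /andP[_ k_lt8] /(walkP (l := 4) isT); exists k.
exists [:: o0; o1; o0; o2], [:: o2; o1; o0; o1]; split=> // k /(walkP (l := 4) isT) Hk.
rewrite leqNgt; apply/negP => k_lt7.
by move/allP: ck4_no_walk_lt7 => /(_ k); rewrite mem_iota k_lt7 Hk => /(_ isT).
Qed.

Theorem lemma6 :
  ck_diameter_is 4 7 /\ ck_diameter_infinite 3 /\
  (forall l, 5 <= l -> ck_diameter_infinite l).
Proof.
split; first exact: ck_diameter_4.
split; first exact: ck_diameter_infinite_not4.
by move=> l l_ge5; apply: ck_diameter_infinite_not4; [lia | apply/eqP; lia].
Qed.
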